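(* Let $\Phi$ be a $\mathsf{BST}^{\otimes}$-conjunction with $n$ distinct variables. Then $\Phi$ is satisfiable if and only if $\Phi$ is fulfilled by an accessible $\otimes$-graph of size at most $2^{n}-1$.
   Context: Sets range over the von Neumann universe of well-founded sets. For sets $s,t$, the unordered Cartesian product is $s\otimes t=\{\{u,v\} : u\in s,\ v\in t\}$. A $\mathsf{BST}^{\otimes}$-formula is a propositional combination of atoms $x=y\cup z$, $x=y\cap z$, $x=y\setminus z$, $x=y\otimes z$, $x\subseteq y$, where $x,y,z$ are set variables; $\mathrm{Vars}(\Phi)$ denotes the variables occurring in $\Phi$. A set assignment $M$ maps variables to sets; $M$ satisfies $\Phi$ if $\Phi$ is true when each variable $v$ is interpreted as $Mv$ and the operators and relators have their usual meaning. $\Phi$ is satisfiable if some set assignment on $\mathrm{Vars}(\Phi)$ satisfies it. A $\mathsf{BST}^{\otimes}$-conjunction is a finite conjunction of literals of the forms $x=y\cup z$, $x=y\setminus z$, $x=y\otimes z$, $x\neq y$. A $\otimes$-graph $\mathcal G=(\mathcal P,\mathcal N,\mathcal T)$ consists of a set $\mathcal P$ of places, the set of nodes $\mathcal N=\mathcal P\otimes\mathcal P$ (i.e. the nonempty subsets of $\mathcal P$ with at most two elements), where $\mathcal P\cap\mathcal N=\emptyset$, and a target map $\mathcal T:\mathcal N\to\mathcal P(\mathcal P)$ (power set); the elements of $\mathcal T(A)$ are the targets of $A$. The size of $\mathcal G$ is $|\mathcal P|$. A place is a source place if it is a target of no node; otherwise it is a $\otimes$-place. A node $A$ is a $\otimes$-node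 if $\mathcal T(A)\neq\emptyset$. The set of accessible places is the smallest set of places containing all source places and containing $\mathcal T(A)$ for every node $A$ all of whose places belong to it. $\mathcal G$ is accessible if all its places are accessible. A map $\mathfrak F:\mathrm{Vars}(\Phi)\to\mathcal P(\mathcal P)$ is a $\mathcal G$-fulfilling map for a $\mathsf{BST}^{\otimes}$-conjunction $\Phi$ if: (a) $\mathfrak F(x)=\mathfrak F(y)\star\mathfrak F(z)$ for each conjunct $x=y\star z$ with $\star\in\{\cup,\setminus\}$; (b) $\mathfrak F(x)\neq\mathfrak F(y)$ for each conjunct $x\neq y$; (c) for each conjunct $x=y\otimes z$: (c1) $\emptyset\neq\mathcal T(\{\upsilon,\zeta\})\subseteq\mathfrak F(x)$ for all $\upsilon\in\mathfrak F(y)$, $\zeta\in\mathfrak F(z)$; (c2) $\mathfrak F(x)\subseteq\bigcup\{\mathcal T(A): A\in\mathfrak F(y)\otimes\mathfrak F(z)\}$; (c3) $\bigcup\{\mathcal T(A): A\in\mathcal N\setminus(\mathfrak F(y)\otimes\mathfrak F(z))\}\cap\mathfrak F(x)=\emptyset$. $\mathcal G$ fulfills $\Phi$ if a $\mathcal G$-fulfilling map for $\Phi$ exists. *)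

From mathcomp Require Import all_boot.
Set Implicit Arguments. Unset Strict Implicit. Unset Printing Implicit Defensive.

Inductive WFSet : Type := sup (A : Type) (f : A -> WFSet).

Fixpoint seteq (x y : WFSet) {struct x} : Prop :=
  match x, y with
  | sup A f, sup B g =>
      (forall a, exists b, seteq (f a) (g b)) /\
      (forall b, exists a, seteq (f a) (g b))
  end.

Definition setin (x y : WFSet) : Prop :=
  match y with sup B g => exists b, seteq x (g b) end.

Definition is_pair (w u v : WFSet) : Prop :=
  forall t, setin t w <-> (seteq t u \/ seteq t v).

Definition var := nat.

Inductive literal : Type :=
  | LUnion  (x y z : var)   (* x = y \cup z     *)
  | LDiff   (x y z : var)   (* x = y \setminus z *)
  | LOtimes (x y z : var)   (* x = y \otimes z  *)
  | LNeq    (x y : var).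

Definition conjunction := seq literal.

Definition lit_vars (l : literal) : seq var :=
  match l with
  | LUnion x y z | LDiff x y z | LOtimes x y z => [:: x; y; z]
  | LNeq x y => [:: x; y]
  end.

Definition vars (Phi : conjunction) : seq var := flatten (map lit_vars Phi).

Definition nvars (Phi : conjunction) : nat := size (undup (vars Phi)).

Definition sat_lit (M : var -> WFSet) (l : literal) : Prop :=
  match l with
  | LUnion x y z => forall w, setin w (M x) <-> (setin w (M y) \/ setin w (M z))
  | LDiff x y z => forall w, setin w (M x) <-> (setin w (M y) /\ ~ setin w (M z))
  | LOtimes x y z => forall w, setin w (M x) <->
        exists u v, setin u (M y) /\ setin v (M z) /\ is_pair w u v
  | LNeq x y => ~ seteq (M x) (M y)
  end.

Definition satisfies (M : var -> WFSet) (Phi : conjunction) : Prop :=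
  foldr (fun l P => sat_lit M l /\ P) True Phi.

Definition satisfiable (Phi : conjunction) : Prop :=
  exists M : var -> WFSet, satisfies M Phi.

(* Places are the elements of a finite type P; nodes are the nonempty subsets
   of P with at most two elements; the target map is only relevant on nodes. *)
Definition is_node (P : finType) (A : {set P}) : bool := (0 < #|A| <= 2)%N.

Definition target_map (P : finType) := {set P} -> {set P}.

Definition source_place (P : finType) (T : target_map P) (p : P) : Prop :=
  forall A : {set P}, is_node A -> p \notin T A.

Definition acc_closed (P : finType) (T : target_map P) (S : {set P}) : Prop :=
  (forall p, source_place T p -> p \in S) /\
  (forall A : {set P}, is_node A -> A \subset S -> T A \subset S).

Definition accessible_place (P : finType) (T : target_map P) (p : P) : Prop :=
  forall S : {set P}, acc_closed T S -> p \in S.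

Definition accessible_graph (P : finType) (T : target_map P) : Prop :=
  forall p : P, accessible_place T p.

Definition in_otimes (P : finType) (X Y A : {set P}) : Prop :=
  exists u v, u \in X /\ v \in Y /\ A = [set u; v].

Definition fulfill_lit (P : finType) (T : target_map P) (F : var -> {set P})
    (l : literal) : Prop :=
  match l with
  | LUnion x y z => F x = F y :|: F z
  | LDiff x y z => F x = F y :\: F z
  | LNeq x y => F x <> F y
  | LOtimes x y z =>
      (forall u v, u \in F y -> v \in F z ->
          T [set u; v] != set0 /\ T [set u; v] \subset F x) /\
      (forall p, p \in F x -> exists A, in_otimes (F y) (F z) A /\ p \in T A) /\
      (* (c3) *)
      (forall A, is_node A -> ~ in_otimes (F y) (F z) A -> [disjoint T A & F x])
  end.

Definition fulfilling_map (P : finType) (T : target_map P) (F : var -> {set P})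
    (Phi : conjunction) : Prop :=
  foldr (fun l Q => fulfill_lit T F l /\ Q) True Phi.

Definition fulfills (P : finType) (T : target_map P) (Phi : conjunction) : Prop :=
  exists F : var -> {set P}, fulfilling_map T F Phi.

From mathcomp Require Import all_boot.
From mathcomp Require Import boolp.
From Stdlib Require List.
Set Implicit Arguments. Unset Strict Implicit. Unset Printing Implicit Defensive.

(* (⇒) From a model M we read off a graph whose places are the nonempty Venn
   regions of the variables that are realised by some set: the signature of a
   set w is the set of variables of Φ whose value contains w.  The region q is a
   target of the node {p1, p2} when some pair {u, v} of sets with signatures
   p1, p2 has signature q and q lies inside a ⊗-variable; a variable is mapped
   to the regions it contains.  Accessibility follows by ∈-induction on the sets
   realising a place.

   (⇐) From a fulfilling graph we build sets out of codes: atoms, which denote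
   pairwise distinct three-element sets, and unordered pairs of codes.  Codes
   are coloured by places: atoms by source places, a pair by a target of the
   node formed by the colours of its components; a counter attached to each
   colour lets the colouring reach every target.  Colours only depend on the
   denoted set, accessibility makes every place a colour, and each variable
   denotes the set of codes coloured by one of its places. *)

Lemma foldr_andP (A : Type) (f : A -> Prop) (s : seq A) :
  foldr (fun a Q => f a /\ Q) True s <-> forall a, List.In a s -> f a.
Proof.
elim: s => [|b s IH] /=; first by split.
rewrite IH; split=> [[fb fs] a [<-|as_]|fs]; [done | exact: fs |].
by split=> [|a as_]; apply: fs; [left | right].
Qed.

Lemma satisfiesP M Phi :
  satisfies M Phi <-> forall l, List.In l Phi -> sat_lit M l.
Proof. exact: foldr_andP. Qed.

Lemma fulfilling_mapP (P : finType) (T : target_map P) F Phi :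
  fulfilling_map T F Phi <-> forall l, List.In l Phi -> fulfill_lit T F l.
Proof. exact: foldr_andP. Qed.

Lemma lit_vars_sub l Phi : List.In l Phi -> {subset lit_vars l <= vars Phi}.
Proof.
elim: Phi => //= l' Phi IH [<-|lPhi] v vl; rewrite /vars /= mem_cat ?vl //.
by rewrite IH ?orbT.
Qed.

Lemma ternary_vars l Phi x y z : List.In l Phi -> lit_vars l = [:: x; y; z] ->
  [/\ x \in vars Phi, y \in vars Phi & z \in vars Phi].
Proof.
move=> lPhi lxyz; have sub v : v \in [:: x; y; z] -> v \in vars Phi.
  by rewrite -lxyz; apply: lit_vars_sub lPhi v.
by split; apply: sub; rewrite !inE eqxx ?orbT.
Qed.

Lemma seteq_refl x : seteq x x.
Proof. by elim: x => A f IH /=; split=> a; exists a; apply: IH. Qed.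

Lemma seteq_sym x y : seteq x y -> seteq y x.
Proof.
elim: x y => A f IH [B g] /= [fg gf]; split.
- by move=> b; have [a ab] := gf b; exists a; apply: IH.
- by move=> a; have [b ab] := fg a; exists b; apply: IH.
Qed.

Lemma seteq_trans x y z : seteq x y -> seteq y z -> seteq x z.
Proof.
elim: x y z => A f IH [B g] [C h] /= [fg gf] [gh hg]; split.
- by move=> a; have [b ab] := fg a; have [c bc] := gh b; exists c; apply: IH ab bc.
- by move=> c; have [b bc] := hg c; have [a ab] := gf b; exists a; apply: IH ab bc.
Qed.

Lemma setin_eql a b X : seteq a b -> setin a X -> setin b X.
Proof.
by case: X => B g /= ab [i ai]; exists i; apply: seteq_trans ai; apply: seteq_sym.
Qed.

Lemma setin_eqr a X Y : seteq X Y -> setin a X -> setin a Y.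
Proof.
case: X Y => A f [B g] /= [fg _] [i ai].
by have [j ij] := fg i; exists j; apply: seteq_trans ai ij.
Qed.

Lemma set_ext X Y : (forall t, setin t X <-> setin t Y) -> seteq X Y.
Proof.
case: X Y => A f [B g] /= XY; split.
- by move=> a; have [b ab] := proj1 (XY (f a)) (ex_intro _ a (seteq_refl _)); exists b.
- move=> b; have [a ab] := proj2 (XY (g b)) (ex_intro _ b (seteq_refl _)).
  by exists a; apply: seteq_sym.
Qed.

Definition pr (a b : WFSet) : WFSet := sup (fun i : bool => if i then a else b).

Lemma pr_pair a b : is_pair (pr a b) a b.
Proof. by move=> t /=; split=> [[[]] ?|[?|?]]; [left | right | exists true | exists false]. Qed.

Lemma is_pair_sym w a b : is_pair w a b -> is_pair w b a.
Proof. by move=> wab t; rewrite wab; tauto. Qed.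

Lemma is_pair_eq w X a b : seteq w X -> is_pair X a b -> is_pair w a b.
Proof. by move=> wX Xab t; rewrite -Xab; split; apply: setin_eqr => //; apply: seteq_sym. Qed.

Lemma pair_inj w a b w' c d : is_pair w a b -> is_pair w' c d -> seteq w w' ->
  (seteq a c /\ seteq b d) \/ (seteq a d /\ seteq b c).
Proof.
move=> wab wcd ww'.
have in_w' t : setin t w -> seteq t c \/ seteq t d.
  by move=> tw; apply/wcd; apply: setin_eqr tw.
have in_w t : setin t w' -> seteq t a \/ seteq t b.
  by move=> tw'; apply/wab; apply: setin_eqr tw'; apply: seteq_sym.
have [ac|ad] := in_w' a (proj2 (wab a) (or_introl (seteq_refl a))).
- have [bc|bd] := in_w' b (proj2 (wab b) (or_intror (seteq_refl b))); last by left.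
  have [da|db] := in_w d (proj2 (wcd d) (or_intror (seteq_refl d))).
  + by left; split=> //; apply: seteq_trans bc _; apply: seteq_sym (seteq_trans da ac).
  + by left; split=> //; apply: seteq_sym.
- have [bc|bd] := in_w' b (proj2 (wab b) (or_intror (seteq_refl b))); first by right.
  have [ca|cb] := in_w c (proj2 (wcd c) (or_introl (seteq_refl c))).
  + by right; split=> //; apply: seteq_trans bd _; apply: seteq_sym (seteq_trans ca ad).
  + by right; split=> //; apply: seteq_sym.
Qed.

Lemma set2_eq (P : finType) (a b c d : P) :
  [set a; b] = [set c; d] -> (a = c /\ b = d) \/ (a = d /\ b = c).
Proof.
move=> abcd.
have ac : a \in [set c; d] by rewrite -abcd set21.
have bd : b \in [set c; d] by rewrite -abcd set22.
have ca : c \in [set a; b] by rewrite abcd set21.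
have db : d \in [set a; b] by rewrite abcd set22.
by move: ac bd ca db => /set2P[] ? /set2P[] ? /set2P[] ? /set2P[] ?; subst; auto.
Qed.

Lemma node2 (P : finType) (a b : P) : is_node [set a; b].
Proof. by rewrite /is_node cards2; case: (a != b). Qed.

Lemma nodeP (P : finType) (A : {set P}) : is_node A -> exists a b, A = [set a; b].
Proof.
case/andP=> A_gt0 A_le2.
have /orP[/cards1P[a ->]|/cards2P[a [b [_ ->]]]] : (#|A| == 1) || (#|A| == 2).
  by move: A_gt0 A_le2; case: #|A| => [|[|[|]]].
- by exists a, a; rewrite setUid.
- by exists a, b.
Qed.

Section ModelToGraph.

Variables (Phi : conjunction) (M : var -> WFSet).
Hypothesis HM : satisfies M Phi.
Local Notation vs := (undup (vars Phi)).
Local Notation n := (size (undup (vars Phi))).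

Definition signature (w : WFSet) : {set 'I_n} :=
  [set i : 'I_n | `[< setin w (M (nth 0 vs i)) >]].

Definition realised (s : {set 'I_n}) : bool :=
  (s != set0) && `[< exists w, signature w = s >].

Local Notation place := {s : {set 'I_n} | realised s}.

Definition region_map (v : var) : {set place} :=
  [set q : place | `[< forall w, signature w = val q -> setin w (M v) >]].

Definition pair_target (A : {set place}) (q : place) : Prop :=
  exists u v w (p1 p2 : place), [/\ signature u = val p1, signature v = val p2,
    A = [set p1; p2], is_pair w u v & signature w = val q].

(* Targets are restricted to places inside a ⊗-variable, so that every set
   realising a target is a pair of sets realising places; accessibility of the
   graph relies on this. *)
Definition inside_otimes (q : place) : Prop :=
  exists x y z, List.In (LOtimes x y z) Phi /\ q \in region_map x.

Definition region_targets : target_map place :=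
  fun A => [set q | `[< inside_otimes q /\ pair_target A q >]].

Lemma signature_eq w w' : seteq w w' -> signature w = signature w'.
Proof.
move=> ww'; apply/setP => i; rewrite !inE; apply: asbool_equiv_eq.
by split; apply: setin_eql => //; apply: seteq_sym.
Qed.

Lemma index_lt v : v \in vars Phi -> index v vs < n.
Proof. by move=> vPhi; rewrite index_mem mem_undup. Qed.

Lemma index_signature v (vPhi : v \in vars Phi) w :
  (Ordinal (index_lt vPhi) \in signature w) = `[< setin w (M v) >].
Proof. by rewrite inE /= nth_index // mem_undup. Qed.

Lemma sat_lit_of l : List.In l Phi -> sat_lit M l.
Proof. exact: (satisfiesP M Phi).1 HM l. Qed.

Lemma signature_det v w w' : v \in vars Phi -> signature w = signature w' ->
  setin w (M v) -> setin w' (M v).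
Proof.
move=> vPhi ww' wv; have : Ordinal (index_lt vPhi) \in signature w'.
  by rewrite -ww' index_signature; apply/asboolP.
by rewrite index_signature => /asboolP.
Qed.

Lemma place_of v w : v \in vars Phi -> setin w (M v) ->
  exists q : place, signature w = val q.
Proof.
move=> vPhi wv; suff sw : realised (signature w) by exists (exist _ (signature w) sw).
apply/andP; split; last by apply/asboolP; exists w.
by apply/set0Pn; exists (Ordinal (index_lt vPhi)); rewrite index_signature; apply/asboolP.
Qed.

Lemma place_witness (q : place) : exists w, signature w = val q.
Proof. by case: q => s /= /andP[_ /asboolP]. Qed.

Lemma region_mapP v (q : place) w : v \in vars Phi -> signature w = val q ->
  q \in region_map v <-> setin w (M v).
Proof.
move=> vPhi wq; rewrite inE; split=> [/asboolP/(_ w wq) //|wv].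
by apply/asboolP => w' w'q; apply: signature_det vPhi _ wv; rewrite wq w'q.
Qed.

Lemma region_targetsP A q :
  reflect (inside_otimes q /\ pair_target A q) (q \in region_targets A).
Proof. by rewrite inE; apply: asboolP. Qed.

Lemma region_union x y z : List.In (LUnion x y z) Phi ->
  region_map x = region_map y :|: region_map z.
Proof.
move=> lPhi; have [xP yP zP] := ternary_vars lPhi erefl.
apply/setP => q; have [w wq] := place_witness q.
have := sat_lit_of lPhi w.
rewrite /= -(region_mapP xP wq) -(region_mapP yP wq) -(region_mapP zP wq) in_setU.
by case=> xyz yzx; apply/idP/orP.
Qed.

Lemma region_diff x y z : List.In (LDiff x y z) Phi ->
  region_map x = region_map y :\: region_map z.
Proof.
move=> lPhi; have [xP yP zP] := ternary_vars lPhi erefl.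
apply/setP => q; have [w wq] := place_witness q.
have := sat_lit_of lPhi w.
rewrite /= -(region_mapP xP wq) -(region_mapP yP wq) -(region_mapP zP wq) in_setD.
by case=> xyz yzx; apply/idP/andP => [/xyz[? /negP]|[/negP ? ?]] //; apply: yzx.
Qed.

Lemma region_neq x y : List.In (LNeq x y) Phi -> region_map x <> region_map y.
Proof.
move=> lPhi xy; apply: (sat_lit_of lPhi); apply: set_ext => t.
have [xP yP] : x \in vars Phi /\ y \in vars Phi.
  by split; apply: (lit_vars_sub lPhi); rewrite !inE eqxx ?orbT.
split=> tM.
- have [q tq] := place_of xP tM.
  by apply/(region_mapP yP tq); rewrite -xy; apply/(region_mapP xP tq).
- have [q tq] := place_of yP tM.
  by apply/(region_mapP xP tq); rewrite xy; apply/(region_mapP yP tq).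
Qed.

Section OtimesLiteral.

Variables (x y z : var).
Hypothesis lPhi : List.In (LOtimes x y z) Phi.

Let xyzP := ternary_vars lPhi erefl.

Lemma region_targets_nonempty u v : u \in region_map y -> v \in region_map z ->
  region_targets [set u; v] != set0.
Proof.
have [xP yP zP] := xyzP.
move=> uy vz; have [a au] := place_witness u; have [b bv] := place_witness v.
have abx : setin (pr a b) (M x).
  apply/(sat_lit_of lPhi); exists a, b.
  by split; [apply/(region_mapP yP au) | split; [apply/(region_mapP zP bv) | apply: pr_pair]].
have [r abr] := place_of xP abx.
apply/set0Pn; exists r; apply/region_targetsP; split.
- by exists x, y, z; split=> //; apply/(region_mapP xP abr).
- by exists a, b, (pr a b), u, v; split=> //; apply: pr_pair.
Qed.

Lemma region_targets_sub u v : u \in region_map y -> v \in region_map z ->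
  region_targets [set u; v] \subset region_map x.
Proof.
have [xP yP zP] := xyzP.
move=> uy vz; apply/subsetP => q /region_targetsP[_].
case=> a [b [w [p1 [p2 [ap1 bp2 uv wab wq]]]]].
apply/(region_mapP xP wq)/(sat_lit_of lPhi).
have [[eu ev]|[eu ev]] := set2_eq uv; subst p1 p2.
- by exists a, b; split; [apply/(region_mapP yP ap1) | split; [apply/(region_mapP zP bp2)|]].
- exists b, a; split; first exact/(region_mapP yP bp2).
  by split; [apply/(region_mapP zP ap1) | apply: is_pair_sym].
Qed.

Lemma region_targets_cover q : q \in region_map x ->
  exists A, in_otimes (region_map y) (region_map z) A /\ q \in region_targets A.
Proof.
have [xP yP zP] := xyzP.
move=> qx; have [w wq] := place_witness q.
have [u [v [uy [vz wuv]]]] := (sat_lit_of lPhi w).1 ((region_mapP xP wq).1 qx).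
have [pu upu] := place_of yP uy; have [pv vpv] := place_of zP vz.
exists [set pu; pv]; split.
- by exists pu, pv; split; [apply/(region_mapP yP upu) | split; [apply/(region_mapP zP vpv)|]].
- apply/region_targetsP; split; first by exists x, y, z.
  by exists u, v, w, pu, pv.
Qed.

(* (c3): a target of a node outside y ⊗ z is not a place of x, because the
   components of a pair in the value of x lie in the values of y and z. *)
Lemma region_targets_exact A : ~ in_otimes (region_map y) (region_map z) A ->
  [disjoint region_targets A & region_map x].
Proof.
have [xP yP zP] := xyzP.
move=> notA; rewrite disjoints_subset; apply/subsetP => q /region_targetsP[_].
case=> u [v [w [p1 [p2 [up1 vp2 Ap wuv wq]]]]]; rewrite in_setC; apply/negP => qx.
have [u' [v' [u'y [v'z wu'v']]]] := (sat_lit_of lPhi w).1 ((region_mapP xP wq).1 qx).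
apply: notA; rewrite Ap.
have [[uu' vv']|[uv' vu']] := pair_inj wuv wu'v' (seteq_refl w).
- exists p1, p2; split; first by apply/(region_mapP yP up1); apply: setin_eql u'y; apply: seteq_sym.
  by split=> //; apply/(region_mapP zP vp2); apply: setin_eql v'z; apply: seteq_sym.
- exists p2, p1; split; first by apply/(region_mapP yP vp2); apply: setin_eql u'y; apply: seteq_sym.
  by rewrite setUC; split=> //; apply/(region_mapP zP up1); apply: setin_eql v'z; apply: seteq_sym.
Qed.

End OtimesLiteral.

Lemma region_lit l : List.In l Phi -> fulfill_lit region_targets region_map l.
Proof.
case: l => [x y z|x y z|x y z|x y] lPhi /=.
- exact: region_union.
- exact: region_diff.
- split=> [u v uy vz|].
    by split; [apply: (region_targets_nonempty lPhi) | apply: (region_targets_sub lPhi)].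
  by split=> [|A _]; [apply: (region_targets_cover lPhi) | apply: (region_targets_exact lPhi)].
- exact: region_neq.
Qed.

(* Every place realised by w lies in every accessibility-closed set, by
   ∈-induction on w: a non-source place q is a target inside a ⊗-variable, so w
   is a pair of sets whose places are already in the set. *)
Lemma realised_accessible S : acc_closed region_targets S ->
  forall w (q : place), signature w = val q -> q \in S.
Proof.
case=> S_src S_tgt; elim=> B g IH q wq.
have [[A [nodeA qA]]|noA] := pselect (exists A, is_node A /\ q \in region_targets A);
  last by apply: S_src => A nodeA; apply/negP => qA; apply: noA; exists A.
have [[x [y [z [lPhi qx]]]] _] := region_targetsP _ _ qA.
have [xP yP zP] := ternary_vars lPhi erefl.
have [u [v [uy [vz wuv]]]] := (sat_lit_of lPhi _).1 ((region_mapP xP wq).1 qx).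
have elemS t (p : place) : setin t (sup g) -> signature t = val p -> p \in S.
  by case=> b tb tp; apply: (IH b); rewrite -tp; apply/esym/signature_eq.
have [pu upu] := place_of yP uy; have [pv vpv] := place_of zP vz.
have puS := elemS u pu (proj2 (wuv u) (or_introl (seteq_refl u))) upu.
have pvS := elemS v pv (proj2 (wuv v) (or_intror (seteq_refl v))) vpv.
have uvS : [set pu; pv] \subset S by apply/subsetP => r /set2P[]->.
apply: (subsetP (S_tgt _ (node2 pu pv) uvS)); apply/region_targetsP; split.
- by exists x, y, z.
- by exists u, v, (sup g), pu, pv.
Qed.

Lemma card_places : #|{: place}| <= 2 ^ n - 1.
Proof.
rewrite card_sig; apply: leq_trans (_ : #|predC1 (set0 : {set 'I_n})| <= _).
  by apply/subset_leq_card/subsetP => s; rewrite !inE => /andP[].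
by rewrite cardC1 -cardsT -powersetT card_powerset cardsT card_ord subn1.
Qed.

Lemma model_graph : exists (P : finType) (T : target_map P),
  #|P| <= 2 ^ nvars Phi - 1 /\ accessible_graph T /\ fulfills T Phi.
Proof.
exists place, region_targets; split; first exact: card_places.
split; first by move=> q S S_acc; have [w wq] := place_witness q; apply: realised_accessible wq.
by exists region_map; apply/fulfilling_mapP; apply: region_lit.
Qed.

End ModelToGraph.

Inductive code : Set := Atom of nat | Pair of code & code.

Fixpoint zermelo (k : nat) : WFSet :=
  match k with
  | 0 => sup (fun e : Empty_set => match e with end)
  | k'.+1 => sup (fun _ : unit => zermelo k')
  end.

(* The m-th atom {0, 1, m+2} has three elements, hence is not a pair. *)
Definition atom_set (m : nat) : WFSet :=
  sup (fun o : option bool =>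
         match o with None => zermelo 0 | Some true => zermelo 1 | Some false => zermelo m.+2 end).

Fixpoint code_set (c : code) : WFSet :=
  match c with Atom m => atom_set m | Pair c1 c2 => pr (code_set c1) (code_set c2) end.

Lemma zermelo_inj a b : seteq (zermelo a) (zermelo b) -> a = b.
Proof.
elim: a b => [|a IH] [|b] //=.
- by case=> _ /(_ tt) [[]].
- by case=> /(_ tt) [[]].
- by case=> /(_ tt) [[] ab] _; rewrite (IH _ ab).
Qed.

Lemma atom_not_pair m a b : ~ seteq (atom_set m) (pr a b).
Proof.
move=> E; have elem t : setin t (atom_set m) -> seteq t a \/ seteq t b.
  by move=> tm; apply/pr_pair; apply: setin_eqr E tm.
have same i j c : seteq (zermelo i) c -> seteq (zermelo j) c -> i = j.
  by move=> ic jc; apply: zermelo_inj (seteq_trans ic (seteq_sym jc)).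
have in0 : setin (zermelo 0) (atom_set m) by exists None; apply: seteq_refl.
have in1 : setin (zermelo 1) (atom_set m) by exists (Some true); apply: seteq_refl.
have in2 : setin (zermelo m.+2) (atom_set m) by exists (Some false); apply: seteq_refl.
case: (elem _ in0) (elem _ in1) (elem _ in2) => h0 [] h1 [] h2;
first [by have := same _ _ _ h0 h1 | by have := same _ _ _ h0 h2 | by have := same _ _ _ h1 h2].
Qed.

Lemma atom_inj m m' : seteq (atom_set m) (atom_set m') -> m = m'.
Proof.
move=> E; have : setin (zermelo m.+2) (atom_set m').
  by apply: setin_eqr E _; exists (Some false); apply: seteq_refl.
by case=> [[[]|]] /zermelo_inj // [].
Qed.

Section GraphToModel.

Variables (P : finType) (T : target_map P).

Definition sources : {set P} :=
  [set p | [forall A : {set P}, is_node A ==> (p \notin T A)]].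

Lemma sourcesP p : reflect (source_place T p) (p \in sources).
Proof.
rewrite inE; apply: (iffP forallP) => [src A nodeA|src A].
- exact: implyP (src A) nodeA.
- by apply/implyP; apply: src.
Qed.

(* [select S k] picks an element of S and a new counter from the counter k, in
   such a way that every element of S comes with every counter. *)
Definition select (S : {set P}) (k : nat) : option (P * nat) :=
  if enum S is p0 :: _ then Some (nth p0 (enum S) (k %% #|S|), k %/ #|S|) else None.

Lemma select_mem (S : {set P}) (k : nat) (q : P) (k' : nat) : select S k = Some (q, k') -> q \in S.
Proof.
rewrite /select; case E: (enum S) => [|p0 s] //= [<- _].
by rewrite -mem_enum E; apply: mem_nth; rewrite -E -cardE ltn_pmod // cardE E.
Qed.

Lemma select_some (S : {set P}) (k : nat) : S != set0 -> exists qk, select S k = Some qk.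
Proof.
rewrite -cards_eq0 cardE /select; case: (enum S) => [|p0 s] //= _.
by eexists.
Qed.

Lemma select_onto (S : {set P}) (k' : nat) (q : P) : q \in S -> exists k, select S k = Some (q, k').
Proof.
move=> qS; set m := #|S|; set j := index q (enum S).
have j_lt : j < m by rewrite /m cardE index_mem mem_enum.
exists (k' * m + j); rewrite /select modnMDl modn_small // divnMDl ?divn_small ?addn0 //;
  last exact: leq_ltn_trans j_lt.
case E: (enum S) => [|p0 s]; first by move: qS; rewrite -mem_enum E.
by rewrite /j E nth_index // -E mem_enum.
Qed.

Fixpoint colour (c : code) : option (P * nat) :=
  match c with
  | Atom m => select sources m
  | Pair c1 c2 =>
      match colour c1, colour c2 with
      | Some (p1, k1), Some (p2, k2) => select (T [set p1; p2]) (k1 + k2)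
      | _, _ => None
      end
  end.

Lemma colour_swap c1 c2 : colour (Pair c1 c2) = colour (Pair c2 c1).
Proof.
rewrite /=; case: (colour c1) => [[p1 k1]|]; case: (colour c2) => [[p2 k2]|] //.
by rewrite setUC addnC.
Qed.

Lemma colour_ext c d : seteq (code_set c) (code_set d) -> colour c = colour d.
Proof.
elim: c d => [m|c1 IH1 c2 IH2] [m'|d1 d2] E.
- by rewrite (atom_inj E).
- by case: (atom_not_pair E).
- by case: (atom_not_pair (seteq_sym E)).
- have [[e1 e2]|[e1 e2]] := pair_inj (pr_pair _ _) (pr_pair _ _) E.
  + by rewrite /= (IH1 _ e1) (IH2 _ e2).
  + by rewrite colour_swap /= (IH1 _ e1) (IH2 _ e2).
Qed.

Lemma colour_atom m q k : colour (Atom m) = Some (q, k) -> source_place T q.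
Proof. by move/select_mem/sourcesP. Qed.

Lemma colour_pairP c1 c2 q k : colour (Pair c1 c2) = Some (q, k) ->
  exists p1 k1 p2 k2,
    [/\ colour c1 = Some (p1, k1), colour c2 = Some (p2, k2) & q \in T [set p1; p2]].
Proof.
rewrite /=; case: (colour c1) => [[p1 k1]|] //; case: (colour c2) => [[p2 k2]|] //.
by move/select_mem => qT; exists p1, k1, p2, k2.
Qed.

Lemma colour_pair_some c1 c2 p1 k1 p2 k2 :
  colour c1 = Some (p1, k1) -> colour c2 = Some (p2, k2) -> T [set p1; p2] != set0 ->
  exists q k, colour (Pair c1 c2) = Some (q, k) /\ q \in T [set p1; p2].
Proof.
move=> c1p c2p /(select_some (k1 + k2)) [[q k] qk].
by exists q, k; rewrite /= c1p c2p qk; split=> //; apply: select_mem qk.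
Qed.

Hypothesis Hacc : accessible_graph T.

(* Every place, with every counter, is the colour of some code: the places with
   this property contain the sources and the targets of their nodes. *)
Lemma colour_onto p k : exists c, colour c = Some (p, k).
Proof.
pose S := [set p : P | `[< forall k, exists c, colour c = Some (p, k) >]].
suff : p \in S by rewrite inE => /asboolP.
apply: Hacc; split=> [p0 /sourcesP p0src|A nodeA AS].
- rewrite inE; apply/asboolP => k0; have [m p0m] := select_onto k0 p0src.
  by exists (Atom m).
- apply/subsetP => q qA; rewrite inE; apply/asboolP => k0.
  have [p1 [p2 A12]] := nodeP nodeA; subst A.
  have colS r : r \in [set p1; p2] -> forall k, exists c, colour c = Some (r, k).
    by move=> /(subsetP AS); rewrite inE => /asboolP.
  have [k12 qk] := select_onto k0 qA.
  have [c1 c1p] := colS p1 (set21 _ _) 0; have [c2 c2p] := colS p2 (set22 _ _) k12.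
  by exists (Pair c1 c2); rewrite /= c1p c2p add0n.
Qed.

Variable F : var -> {set P}.

Definition coloured_in (x : var) (c : code) : bool :=
  if colour c is Some (q, _) then q \in F x else false.

Definition model (x : var) : WFSet :=
  sup (fun s : {c : code | coloured_in x c} => code_set (val s)).

Lemma setin_model t x :
  setin t (model x) <-> exists c, coloured_in x c /\ seteq t (code_set c).
Proof.
split; first by case=> [[c cx] tc]; exists c.
by case=> c [cx tc]; exists (exist _ c cx).
Qed.

Lemma code_set_model c x : setin (code_set c) (model x) <-> coloured_in x c.
Proof.
split=> [/setin_model[d [dx cd]]|cx]; first by rewrite /coloured_in (colour_ext cd).
by apply/setin_model; exists c; split=> //; apply: seteq_refl.
Qed.

Lemma model_union x y z : F x = F y :|: F z -> sat_lit model (LUnion x y z).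
Proof.
move=> Fxyz; have col c : coloured_in x c = coloured_in y c || coloured_in z c.
  by rewrite /coloured_in; case: (colour c) => [[q _]|] //; rewrite Fxyz in_setU.
move=> t; split.
- case/setin_model => c [+ tc]; rewrite col => /orP[] cyz; [left | right];
    by apply/setin_model; exists c.
- by case=> /setin_model[c [cyz tc]]; apply/setin_model; exists c; rewrite col cyz ?orbT.
Qed.

Lemma model_diff x y z : F x = F y :\: F z -> sat_lit model (LDiff x y z).
Proof.
move=> Fxyz; have col c : coloured_in x c = coloured_in y c && ~~ coloured_in z c.
  by rewrite /coloured_in; case: (colour c) => [[q _]|] //; rewrite Fxyz in_setD andbC.
move=> t; split.
- case/setin_model => c [+ tc]; rewrite col => /andP[cy /negP cz].
  split; first by apply/setin_model; exists c.
  case/setin_model => d [dz td]; apply: cz; apply/code_set_model/setin_model.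
  by exists d; split=> //; apply: seteq_trans (seteq_sym tc) td.
- case=> /setin_model[c [cy tc]] tz; apply/setin_model; exists c; split=> //.
  by rewrite col cy; apply/negP => cz; apply: tz; apply/setin_model; exists c.
Qed.

Lemma pair_congr t u v a b :
  is_pair t u v -> seteq u a -> seteq v b -> seteq t (pr a b).
Proof.
move=> tuv ua vb; apply: set_ext => s; rewrite tuv pr_pair.
split=> [[su|sv]|[sa|sb]]; [left | right | left | right].
- exact: seteq_trans su ua.
- exact: seteq_trans sv vb.
- exact: seteq_trans sa (seteq_sym ua).
- exact: seteq_trans sb (seteq_sym vb).
Qed.

(* Elements of x are pairs of elements of y and z: an element of x is coded by
   a pair, since sources are not targets, and by (c3) its components are
   coloured in y and z. *)
Lemma model_otimes_sub x y z : fulfill_lit T F (LOtimes x y z) ->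
  forall t, setin t (model x) ->
  exists u v, setin u (model y) /\ setin v (model z) /\ is_pair t u v.
Proof.
case=> _ [cover exact] t /setin_model[c [+ tc]].
rewrite /coloured_in; case cq: (colour c) => [[q k]|] // qx.
case: c tc cq => [m|c1 c2] tc cq.
  have [A [[u [v [_ [_ ->]]]] qA]] := cover q qx.
  by move: (colour_atom cq (node2 u v)); rewrite qA.
have [p1 [k1 [p2 [k2 [c1p c2p qT]]]]] := colour_pairP cq.
have tc12 := is_pair_eq tc (pr_pair (code_set c1) (code_set c2)).
have [[u [v [uy [vz p12]]]]|notin] := pselect (in_otimes (F y) (F z) [set p1; p2]);
  last by move: (disjointFr (exact _ (node2 p1 p2) notin) qT); rewrite qx.
have [[eu ev]|[eu ev]] := set2_eq p12; subst u v.
- exists (code_set c1), (code_set c2).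
  by rewrite !code_set_model /coloured_in c1p c2p.
- exists (code_set c2), (code_set c1).
  by rewrite !code_set_model /coloured_in c1p c2p; split=> //; split=> //; apply: is_pair_sym.
Qed.

Lemma model_otimes_sup x y z : fulfill_lit T F (LOtimes x y z) ->
  forall t, (exists u v, setin u (model y) /\ setin v (model z) /\ is_pair t u v) ->
  setin t (model x).
Proof.
case=> targets _ t [u [v [/setin_model[c1 [+ uc1]] [/setin_model[c2 [+ vc2]] tuv]]]].
rewrite /coloured_in; case c1p: (colour c1) => [[p1 k1]|] //.
case c2p: (colour c2) => [[p2 k2]|] // p1y p2z.
have [ne sub] := targets _ _ p1y p2z.
have [q [k [cq qT]]] := colour_pair_some c1p c2p ne.
apply/setin_model; exists (Pair c1 c2); split; first by rewrite /coloured_in cq (subsetP sub).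
exact: pair_congr tuv uc1 vc2.
Qed.

(* Distinct places of x and y are told apart by a code of that colour. *)
Lemma model_neq x y : F x <> F y -> ~ seteq (model x) (model y).
Proof.
move=> Fxy E; apply: Fxy; apply/setP => q.
have [c cq] := colour_onto q 0.
have col v : (q \in F v) = coloured_in v c by rewrite /coloured_in cq.
rewrite !col; apply/idP/idP => /code_set_model cM; apply/code_set_model.
- exact: setin_eqr E cM.
- exact: setin_eqr (seteq_sym E) cM.
Qed.

Lemma model_lit l : fulfill_lit T F l -> sat_lit model l.
Proof.
case: l => [x y z|x y z|x y z|x y].
- exact: model_union.
- exact: model_diff.
- by move=> xyz t; split; [apply: model_otimes_sub | apply: model_otimes_sup].
- exact: model_neq.
Qed.

Lemma graph_model Phi : fulfilling_map T F Phi -> satisfiable Phi.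
Proof.
move/fulfilling_mapP => lits; exists model; apply/satisfiesP => l /lits.
exact: model_lit.
Qed.

End GraphToModel.

Theorem mainTheorem1 (Phi : conjunction) :
  satisfiable Phi <->
  exists (P : finType) (T : target_map P),
    (#|P| <= 2 ^ nvars Phi - 1)%N /\ accessible_graph T /\ fulfills T Phi.
Proof.
split=> [[M HM]|[P [T [_ [accT [F HF]]]]]].
- exact: model_graph HM.
- exact: (graph_model accT HF).
Qed.
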